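(* Let $a>0$, $b>0$, let $p\in\mathbb{N}$, and let $\alpha,\beta,t$ be real numbers with $\alpha+\beta t>1$. Then \[ a\gamma + b\ln p + a\psi(\alpha+\beta t) - b\psi_p(\alpha+\beta t) > 0 . \]
   Context: $\gamma$ denotes the Euler–Mascheroni constant and $\psi(t)=\Gamma'(t)/\Gamma(t)$ is the digamma function for $t>0$, where $\Gamma$ is Euler's Gamma function. For $p\in\mathbb{N}$ and $t>0$, the $p$-Gamma function is $\Gamma_p(t)=\frac{p!\,p^t}{t(t+1)\cdots(t+p)}$, and $\psi_p(t)=\frac{d}{dt}\ln\Gamma_p(t)=\Gamma_p'(t)/\Gamma_p(t)$. *)

From Stdlib Require Import Reals Rprod Factorial.
From Coquelicot Require Import Coquelicot.
Open Scope R_scope.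

Definition euler_gamma : R :=
  real (Lim_seq (fun n => sum_f_R0 (fun k => / INR (S k)) n - ln (INR (S n)))).

Definition Gamma_p (p : nat) (t : R) : R :=
  INR (Factorial.fact p) * Rpower (INR p) t / prod_f_R0 (fun k => t + INR k) p.

(* Euler's Gamma function on t > 0, via Gauss' limit Gamma(t) = lim_p Gamma_p(t). *)
Definition Gamma (t : R) : R := real (Lim_seq (fun p => Gamma_p p t)).

Definition digamma (t : R) : R := Derive Gamma t / Gamma t.

Definition psi_p (p : nat) (t : R) : R := Derive (fun s => ln (Gamma_p p s)) t.

(* Since ln Gamma_p(x) = ln p! + x ln p - sum_(k<=p) ln(x+k), we have
   ln p - psi_p(x) = sum_(k<=p) 1/(x+k) > 0, so it remains to show that
   gamma + psi(x) >= 0 for x >= 1.  Comparing ln Gamma_p(x+h) - ln Gamma_p(x)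
   term by term with h (H_(p+1) - ln p) and letting p -> oo gives
   Gamma(x+h) >= Gamma(x) exp(-gamma h) >= Gamma(x) (1 - gamma h) for h > 0,
   and hence Gamma'(x) >= -gamma Gamma(x). *)
From Stdlib Require Import Reals Lra Lia.
From Coquelicot Require Import Coquelicot.
Open Scope R_scope.

Lemma ln_le_sub1 z : 0 < z -> ln z <= z - 1.
Proof.
  intro Hz. rewrite <- (ln_exp (z - 1)).
  apply ln_le; [exact Hz | pose proof (exp_ineq1_le (z - 1)); lra].
Qed.

Lemma ln_sub_le u v : 0 < u -> 0 < v -> ln u - ln v <= (u - v) / v.
Proof.
  intros Hu Hv. rewrite <- ln_div by lra.
  replace ((u - v) / v) with (u / v - 1) by (field; lra).
  apply ln_le_sub1, Rdiv_lt_0_compat; lra.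
Qed.

Lemma ln_sub_ge u v : 0 < u -> 0 < v -> (u - v) / u <= ln u - ln v.
Proof.
  intros Hu Hv. pose proof (ln_sub_le v u Hv Hu).
  replace ((u - v) / u) with (- ((v - u) / u)) by (field; lra). lra.
Qed.

Lemma exp_le_compat x y : x <= y -> exp x <= exp y.
Proof.
  intros [Hlt | ->]; [left; apply exp_increasing, Hlt | apply Rle_refl].
Qed.

Lemma prod_f_R0_exp_ln (f : nat -> R) n :
  (forall k, 0 < f k) -> prod_f_R0 f n = exp (sum_f_R0 (fun k => ln (f k)) n).
Proof.
  intro Hf. induction n as [|n IH]; simpl.
  - rewrite exp_ln; auto.
  - rewrite IH, exp_plus, exp_ln; auto.
Qed.

Definition ln_Gamma_p (p : nat) (y : R) : R :=
  ln (INR (Factorial.fact p)) + y * ln (INR p) - sum_f_R0 (fun k => ln (y + INR k)) p.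

Lemma Gamma_p_exp_ln p y : (1 <= p)%nat -> 0 < y -> Gamma_p p y = exp (ln_Gamma_p p y).
Proof.
  intros Hp Hy. unfold Gamma_p, ln_Gamma_p, Rpower.
  rewrite prod_f_R0_exp_ln by (intro k; pose proof (pos_INR k); lra).
  assert (Hfact : 0 < INR (Factorial.fact p)) by apply lt_0_INR, Factorial.lt_O_fact.
  unfold Rminus, Rdiv. rewrite !exp_plus, exp_Ropp, exp_ln by exact Hfact. ring.
Qed.

Lemma ln_Gamma_p_S p y : (1 <= p)%nat ->
  ln_Gamma_p (S p) y = ln_Gamma_p p y + ln (INR (S p))
    + y * (ln (INR (S p)) - ln (INR p)) - ln (y + INR (S p)).
Proof.
  intro Hp. unfold ln_Gamma_p. rewrite fact_simpl, mult_INR, ln_mult.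
  - rewrite tech5. ring.
  - apply lt_0_INR; lia.
  - apply lt_0_INR, Factorial.lt_O_fact.
Qed.

Lemma ln_Gamma_p_le_S p y : (1 <= p)%nat -> 0 < y -> ln_Gamma_p p y <= ln_Gamma_p (S p) y.
Proof.
  intros Hp Hy. rewrite ln_Gamma_p_S, S_INR by exact Hp.
  assert (Hq : 1 <= INR p) by (apply (le_INR 1); exact Hp).
  set (q := INR p) in *.
  pose proof (ln_sub_le (y + (q + 1)) (q + 1) ltac:(lra) ltac:(lra)) as Hnum.
  pose proof (ln_sub_ge (q + 1) q ltac:(lra) ltac:(lra)) as Hlog.
  assert (Hy_log : y * ((q + 1 - q) / (q + 1)) <= y * (ln (q + 1) - ln q))
    by (apply Rmult_le_compat_l; lra).
  replace (y + (q + 1) - (q + 1)) with y in Hnum by ring.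
  replace (y * ((q + 1 - q) / (q + 1))) with (y / (q + 1)) in Hy_log by (field; lra).
  lra.
Qed.

Lemma ln_Gamma_p_S_sub_le p y : (1 <= p)%nat -> 0 < y ->
  ln_Gamma_p (S p) y - ln_Gamma_p p y <= y * (y + 1) * (/ INR p - / INR (S p)).
Proof.
  intros Hp Hy. rewrite ln_Gamma_p_S, S_INR by exact Hp.
  assert (Hq : 1 <= INR p) by (apply (le_INR 1); exact Hp).
  set (q := INR p) in *.
  pose proof (ln_sub_ge (y + (q + 1)) (q + 1) ltac:(lra) ltac:(lra)) as Hnum.
  pose proof (ln_sub_le (q + 1) q ltac:(lra) ltac:(lra)) as Hlog.
  assert (Hy_log : y * (ln (q + 1) - ln q) <= y * ((q + 1 - q) / q))
    by (apply Rmult_le_compat_l; lra).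
  replace (y + (q + 1) - (q + 1)) with y in Hnum by ring.
  assert (Hrat : y * ((q + 1 - q) / q) - y / (y + (q + 1))
                 <= y * (y + 1) * (/ q - / (q + 1))).
  { replace (y * ((q + 1 - q) / q) - y / (y + (q + 1)))
      with (y * (y + 1) * / (q * (y + q + 1))) by (field; lra).
    replace (/ q - / (q + 1)) with (/ (q * (q + 1))) by (field; lra).
    apply Rmult_le_compat_l; [nra|].
    apply Rinv_le_contravar; nra. }
  lra.
Qed.

Lemma ln_Gamma_p_bounded n y : 0 < y ->
  ln_Gamma_p (S n) y + y * (y + 1) / INR (S n) <= ln_Gamma_p 1 y + y * (y + 1).
Proof.
  intro Hy. induction n as [|n IH].
  - simpl INR. lra.
  - pose proof (ln_Gamma_p_S_sub_le (S n) y ltac:(lia) Hy).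
    unfold Rdiv in *. lra.
Qed.

Lemma Gamma_p_cvg y : 0 < y -> is_lim_seq (fun p => Gamma_p p y) (Gamma y) /\ 0 < Gamma y.
Proof.
  intro Hy. set (v n := Gamma_p (S n) y).
  assert (Hv : forall n, v n = exp (ln_Gamma_p (S n) y))
    by (intro n; apply Gamma_p_exp_ln; [lia | exact Hy]).
  assert (Hinc : forall n, v n <= v (S n)).
  { intro n. rewrite !Hv. apply exp_le_compat, ln_Gamma_p_le_S; [lia | exact Hy]. }
  assert (Hbnd : forall n, v n <= exp (ln_Gamma_p 1 y + y * (y + 1))).
  { intro n. rewrite Hv. apply exp_le_compat.
    pose proof (ln_Gamma_p_bounded n y Hy).
    assert (0 <= y * (y + 1) / INR (S n))
      by (apply Rdiv_le_0_compat; [nra | apply lt_0_INR; lia]).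
    lra. }
  destruct (ex_finite_lim_seq_incr v _ Hinc Hbnd) as [l Hl].
  assert (Hlim : is_lim_seq (fun p => Gamma_p p y) l) by (apply is_lim_seq_incr_1; exact Hl).
  replace (Gamma y) with l by (unfold Gamma; rewrite (is_lim_seq_unique _ _ Hlim); reflexivity).
  split; [exact Hlim|].
  assert (Hv0 : Rbar_le (v 0%nat) l).
  { apply (is_lim_seq_le_loc (fun _ => v 0%nat) v); [|apply is_lim_seq_const | exact Hl].
    exists 0%nat. intros n _. induction n as [|n IH]; [lra | pose proof (Hinc n); lra]. }
  pose proof (exp_pos (ln_Gamma_p 1 y)) as Hpos. rewrite <- (Hv 0%nat) in Hpos.
  simpl in Hv0. lra.
Qed.

(* [harmonic n] is H_(n+1) = 1 + 1/2 + ... + 1/(n+1). *)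
Definition harmonic (n : nat) : R := sum_f_R0 (fun k => / INR (S k)) n.

Lemma harmonic_S n : harmonic (S n) = harmonic n + / INR (S (S n)).
Proof. reflexivity. Qed.

Lemma ln_le_harmonic n : ln (INR (S (S n))) <= harmonic n.
Proof.
  induction n as [|n IH].
  - unfold harmonic. simpl sum_f_R0.
    replace (INR 2) with 2 by (simpl; ring). simpl INR. rewrite Rinv_1.
    pose proof (ln_le_sub1 2 ltac:(lra)). lra.
  - rewrite harmonic_S.
    pose proof (ln_sub_le (INR (S (S (S n)))) (INR (S (S n)))
                  ltac:(apply lt_0_INR; lia) ltac:(apply lt_0_INR; lia)) as Hstep.
    rewrite (S_INR (S (S n))) in Hstep |- *.
    replace (INR (S (S n)) + 1 - INR (S (S n))) with 1 in Hstep by ring.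
    unfold Rdiv in Hstep. lra.
Qed.

Definition euler_seq (n : nat) : R := harmonic n - ln (INR (S n)).

Lemma euler_seq_ge0 n : 0 <= euler_seq n.
Proof.
  unfold euler_seq. pose proof (ln_le_harmonic n).
  assert (ln (INR (S n)) <= ln (INR (S (S n))))
    by (apply ln_le; [apply lt_0_INR; lia | apply le_INR; lia]).
  lra.
Qed.

Lemma euler_seq_le_S n : euler_seq (S n) <= euler_seq n.
Proof.
  unfold euler_seq. rewrite harmonic_S.
  pose proof (ln_sub_ge (INR (S (S n))) (INR (S n))
                ltac:(apply lt_0_INR; lia) ltac:(apply lt_0_INR; lia)) as Hstep.
  rewrite (S_INR (S n)) in Hstep |- *.
  replace (INR (S n) + 1 - INR (S n)) with 1 in Hstep by ring.
  unfold Rdiv in Hstep. lra.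
Qed.

Lemma euler_seq_cvg : is_lim_seq euler_seq euler_gamma /\ 0 <= euler_gamma.
Proof.
  destruct (ex_finite_lim_seq_decr euler_seq 0 euler_seq_le_S euler_seq_ge0) as [l Hl].
  replace euler_gamma with l
    by (change euler_gamma with (real (Lim_seq euler_seq));
        rewrite (is_lim_seq_unique euler_seq l Hl); reflexivity).
  split; [exact Hl|].
  assert (Hge : Rbar_le 0 l).
  { apply (is_lim_seq_le_loc (fun _ => 0) euler_seq); [|apply is_lim_seq_const | exact Hl].
    exists 0%nat. intros n _. apply euler_seq_ge0. }
  exact Hge.
Qed.

(* The shift from ln (n+1) to ln n costs at most 1/n. *)
Lemma harmonic_sub_ln_cvg : is_lim_seq (fun n => harmonic n - ln (INR n)) euler_gamma.
Proof.
  destruct euler_seq_cvg as [He _].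
  assert (Hshift : is_lim_seq (fun n => ln (INR (S n)) - ln (INR n)) 0).
  { apply (is_lim_seq_le_le_loc (fun _ => 0) _ (fun n => / INR n)).
    - exists 1%nat. intros n Hn.
      assert (Hq : 1 <= INR n) by (apply (le_INR 1); exact Hn).
      rewrite S_INR. split.
      + assert (ln (INR n) <= ln (INR n + 1)) by (apply ln_le; lra). lra.
      + pose proof (ln_sub_le (INR n + 1) (INR n) ltac:(lra) ltac:(lra)) as Hstep.
        replace (INR n + 1 - INR n) with 1 in Hstep by ring. unfold Rdiv in Hstep. lra.
    - apply is_lim_seq_const.
    - replace (Finite 0) with (Rbar_inv p_infty) by reflexivity.
      apply is_lim_seq_inv; [apply is_lim_seq_INR | discriminate]. }
  pose proof (is_lim_seq_plus' _ _ _ _ He Hshift) as Hsum.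
  rewrite Rplus_0_r in Hsum.
  apply is_lim_seq_ext with (2 := Hsum). intro n. unfold euler_seq. ring.
Qed.

Lemma sum_ln_shift_le x h p : 1 <= x -> 0 < h ->
  sum_f_R0 (fun k => ln (x + h + INR k)) p - sum_f_R0 (fun k => ln (x + INR k)) p
  <= h * harmonic p.
Proof.
  intros Hx Hh. unfold harmonic. rewrite <- minus_sum, scal_sum.
  apply sum_Rle. intros k _. pose proof (pos_INR k).
  pose proof (ln_sub_le (x + h + INR k) (x + INR k) ltac:(lra) ltac:(lra)) as Hstep.
  replace (x + h + INR k - (x + INR k)) with h in Hstep by ring.
  assert (/ (x + INR k) <= / INR (S k)) by (rewrite S_INR; apply Rinv_le_contravar; lra).
  unfold Rdiv in Hstep. nra.
Qed.

Lemma Gamma_p_shift_ge p x h : (1 <= p)%nat -> 1 <= x -> 0 < h ->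
  Gamma_p p x * exp (- h * (harmonic p - ln (INR p))) <= Gamma_p p (x + h).
Proof.
  intros Hp Hx Hh. rewrite !Gamma_p_exp_ln by (auto; lra).
  rewrite <- exp_plus. apply exp_le_compat. unfold ln_Gamma_p.
  pose proof (sum_ln_shift_le x h p Hx Hh). nra.
Qed.

Lemma Gamma_shift_ge x h : 1 <= x -> 0 < h ->
  Gamma x * exp (- h * euler_gamma) <= Gamma (x + h).
Proof.
  intros Hx Hh.
  destruct (Gamma_p_cvg x ltac:(lra)) as [Hx_lim _].
  destruct (Gamma_p_cvg (x + h) ltac:(lra)) as [Hxh_lim _].
  assert (Hexp : is_lim_seq (fun p => exp (- h * (harmonic p - ln (INR p))))
                            (exp (- h * euler_gamma))).
  { apply (is_lim_seq_continuous exp).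
    - apply derivable_continuous_pt, derivable_pt_exp.
    - apply is_lim_seq_mult'; [apply is_lim_seq_const | apply harmonic_sub_ln_cvg]. }
  assert (Hle : Rbar_le (Gamma x * exp (- h * euler_gamma)) (Gamma (x + h))).
  { refine (is_lim_seq_le_loc _ _ _ _ _ (is_lim_seq_mult' _ _ _ _ Hx_lim Hexp) Hxh_lim).
    exists 1%nat. intros n Hn. apply Gamma_p_shift_ge; assumption. }
  exact Hle.
Qed.

(* [Derive f x] is the limit of the difference quotients along h = 1/(n+1), and
   is 0 when that limit is infinite: hence the hypothesis [c <= 0]. *)
Lemma Derive_ge_right_quotients (f : R -> R) x c : c <= 0 ->
  (forall h, 0 < h -> c <= (f (x + h) - f x) / h) -> c <= Derive f x.
Proof.
  intros Hc Hq. unfold Derive, Lim.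
  assert (Hle : Rbar_le (Lim_seq (fun _ => c))
    (Lim_seq (fun n => (f (x + Rbar_loc_seq 0 n) - f x) / Rbar_loc_seq 0 n))).
  { apply Lim_seq_le_loc. exists 0%nat. intros n _. apply Hq. simpl.
    pose proof (pos_INR n). rewrite Rplus_0_l. apply Rinv_0_lt_compat. lra. }
  rewrite Lim_seq_const in Hle.
  destruct (Lim_seq _); simpl in *; [exact Hle | exact Hc | contradiction].
Qed.

Lemma digamma_ge x : 1 <= x -> - euler_gamma <= digamma x.
Proof.
  intro Hx. destruct euler_seq_cvg as [_ Hgamma].
  destruct (Gamma_p_cvg x ltac:(lra)) as [_ HG].
  assert (HD : - euler_gamma * Gamma x <= Derive Gamma x).
  { apply Derive_ge_right_quotients; [nra|]. intros h Hh.
    pose proof (Gamma_shift_ge x h Hx Hh).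
    pose proof (exp_ineq1_le (- h * euler_gamma)).
    assert (Gamma x * (1 + - h * euler_gamma) <= Gamma x * exp (- h * euler_gamma))
      by (apply Rmult_le_compat_l; lra).
    apply (Rmult_le_reg_r h); [exact Hh|].
    replace ((Gamma (x + h) - Gamma x) / h * h) with (Gamma (x + h) - Gamma x)
      by (field; lra).
    nra. }
  unfold digamma. apply (Rmult_le_reg_r (Gamma x)); [exact HG|].
  replace (Derive Gamma x / Gamma x * Gamma x) with (Derive Gamma x) by (field; lra).
  exact HD.
Qed.

Lemma psi_p_eq p x : (1 <= p)%nat -> 0 < x ->
  psi_p p x = ln (INR p) - sum_f_R0 (fun k => / (x + INR k)) p.
Proof.
  intros Hp Hx. unfold psi_p.
  rewrite (Derive_ext_loc _ (ln_Gamma_p p)).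
  - apply is_derive_unique. unfold ln_Gamma_p.
    apply (is_derive_minus (fun t => ln (INR (Factorial.fact p)) + t * ln (INR p))).
    + auto_derive; [exact I | ring].
    + apply (is_derive_ext (fun t => sum_n (fun k => ln (t + INR k)) p));
        [intro t; apply sum_n_Reals|].
      rewrite <- sum_n_Reals.
      apply (is_derive_sum_n (fun k t => ln (t + INR k))).
      intros k _. pose proof (pos_INR k).
      auto_derive; [lra | field; lra].
  - apply (locally_interval _ x 0 p_infty); [exact Hx | exact I|].
    intros y Hy _. rewrite Gamma_p_exp_ln by assumption. apply ln_exp.
Qed.

Theorem lemma3p2 (a b : R) (p : nat) (alpha beta t : R) :
  0 < a -> 0 < b -> (1 <= p)%nat -> alpha + beta * t > 1 ->
  a * euler_gamma + b * ln (INR p) + a * digamma (alpha + beta * t)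
    - b * psi_p p (alpha + beta * t) > 0.
Proof.
  intros Ha Hb Hp Hx. set (x := alpha + beta * t) in *.
  rewrite psi_p_eq by (auto; lra).
  assert (Hsum : 0 < sum_f_R0 (fun k => / (x + INR k)) p)
    by (apply tech1; intros k _; pose proof (pos_INR k); apply Rinv_0_lt_compat; lra).
  pose proof (digamma_ge x ltac:(lra)) as Hpsi.
  assert (0 <= a * (euler_gamma + digamma x)) by (apply Rmult_le_pos; lra).
  assert (0 < b * sum_f_R0 (fun k => / (x + INR k)) p) by (apply Rmult_lt_0_compat; lra).
  nra.
Qed.
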